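(* Let $k$ be a number field, $\mathcal G$ a finite group, $H$ a finite abelian group, $\mu:\mathcal G\to\mathrm{Aut}(H)$ an action, $k_1/k$ a Galois extension with group identified with $\mathcal G$, and $\tau\in H$. Then $E_{k,\mu,\tau}\subseteq Z_{k_1/k,\mu,\tau}\cap k(\zeta_{o(\tau)})$, with equality if $k_1\cap k(\zeta_{o(\tau)})=k$.
   Context: $o(\tau)$ is the order of $\tau$ and $\zeta_t$ a primitive $t$-th root of unity. Let $\nu_{k,\tau}:\mathrm{Gal}(k(\zeta_{o(\tau)})/k)\to(\mathbb Z/o(\tau))^*$ be given by $g(\zeta_{o(\tau)})=\zeta_{o(\tau)}^{\nu_{k,\tau}(g)}$; $\tilde G_{k,\mu,\tau}=\{(g_1,g_2)\in\mathcal G\times\mathrm{Gal}(k(\zeta_{o(\tau)})/k):\mu(g_1)(\tau)=\tau^{\nu_{k,\tau}(g_2)}\}$; $G_{k,\mu,\tau}$ is the set of $g_2$ with $(g_1,g_2)\in\tilde G_{k,\mu,\tau}$ for some $g_1$, and $E_{k,\mu,\tau}$ is its fixed field in $k(\zeta_{o(\tau)})$. Identify $\mathrm{Gal}(k_1(\zeta_{o(\tau)})/k)$ with its image in $\mathcal G\times\mathrm{Gal}(k(\zeta_{o(\tau)})/k)$ via $g\mapsto(g|_{k_1},g|_{k(\zeta_{o(\tau)})})$, put $\tilde G_{k_1/k,\mu,\tau}=\tilde G_{k,\mu,\tau}\cap\mathrm{Gal}(k_1(\zeta_{o(\tau)})/k)$, and let $Z_{k_1/k,\mu,\tau}$ be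 its fixed field in $k_1(\zeta_{o(\tau)})$. *)

From HB Require Import structures.
From mathcomp Require Import all_boot all_order all_algebra all_fingroup all_solvable all_field.
Set Implicit Arguments. Unset Strict Implicit. Unset Printing Implicit Defensive.
Import GRing.Theory.
Local Open Scope ring_scope.

(* Ambient field: L is a finite Galois (splitting) extension of Q, so every
   subfield of L is a number field.  k, k1 : {subfield L}; z plays zeta_{o(tau)}. *)
Section Defs.
Variables (L : splittingFieldType rat) (hT : finGroupType).

Definition nu (z : L) (n : nat) (V : {vspace L}) (g : gal_of V) : nat :=
  index (g z) (mkseq (fun i => z ^+ i) n).

Definition tGcond (k1 : {vspace L}) (mu : gal_of k1 -> {perm hT}) (tau : hT)
  (z : L) (V : {vspace L}) (g1 : gal_of k1) (g2 : gal_of V) : bool :=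
  (mu g1 tau == tau ^+ nu z #[tau]%g g2)%g.

(* G_{k,mu,tau} : projection of tilde G to Gal(k(z)/k) *)
Definition Gkmt (k k1 : {subfield L}) (mu : gal_of k1 -> {perm hT}) (tau : hT)
  (z : L) : {set gal_of <<k; z>>%AS} :=
  [set g2 in 'Gal(<<k; z>>%AS / k)%g |
     [exists g1 in 'Gal(k1 / k)%g, tGcond mu tau z g1 g2]].

Definition Ekmt (k k1 : {subfield L}) (mu : gal_of k1 -> {perm hT}) (tau : hT)
  (z : L) : {vspace L} := fixedField (Gkmt k mu tau z).

(* tilde G_{k1/k,mu,tau} : elements g of Gal(k1(z)/k) with (g|k1, g|k(z)) in tilde G *)
Definition Gk1kmt (k k1 : {subfield L}) (mu : gal_of k1 -> {perm hT}) (tau : hT)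
  (z : L) : {set gal_of <<k1; z>>%AS} :=
  [set g in 'Gal(<<k1; z>>%AS / k)%g |
     tGcond mu tau z (gal k1 g) (gal <<k; z>>%AS g)].

Definition Zk1kmt (k k1 : {subfield L}) (mu : gal_of k1 -> {perm hT}) (tau : hT)
  (z : L) : {vspace L} := fixedField (Gk1kmt k mu tau z).
End Defs.

From HB Require Import structures.
From mathcomp Require Import all_boot all_order all_algebra all_fingroup all_solvable all_field.
Set Implicit Arguments. Unset Strict Implicit. Unset Printing Implicit Defensive.
Import GRing.Theory.
Local Open Scope ring_scope.

(* Let E = k1(z) and M = k(z), both Galois over k.  An element of Gal(E/k)
   lying in tilde G_{k1/k} restricts to M inside G_{k,mu,tau}, which gives the
   inclusion.  When k1 and M meet in k, the restriction map
   Gal(E/k) -> Gal(k1/k) x Gal(M/k) is onto, so every g2 in G_{k,mu,tau} is the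
   restriction of an element of tilde G_{k1/k}, and the fixed fields agree. *)

Section NormalFields.
Variable L : splittingFieldType rat.

Lemma char0_separable (K E : {subfield L}) : separable K E.
Proof.
apply/separableP => y _; apply: pcharf0_separable => p.
by rewrite (pchar_lalg L) Num.Theory.pchar_num.
Qed.

Lemma AEnd_prim_root (f : 'AEnd(L)) (z : L) n :
  n.-primitive_root z -> exists i, f z = z ^+ i.
Proof.
move=> pz; have : f z ^+ n = 1 by rewrite -rmorphXn (prim_expr_order pz) rmorph1.
by case/(prim_rootP pz) => i ->; exists i.
Qed.

Lemma normalField_refl (K : {subfield L}) : normalField K K.
Proof.
apply/forall_inP => g; rewrite inE kAutfE => /andP[_].
by move/fixedSpace_limg->.
Qed.

(* An automorphism maps z to a power of z, hence maps M(z) into itself. *)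
Lemma normalField_adjoin_prim_root (K M : {subfield L}) z n :
  n.-primitive_root z -> normalField K M -> normalField K <<M; z>>%AS.
Proof.
move=> pz nKM; apply/forall_inP => g gK.
have /eqP gM : (g @: M)%VS == M by exact: (forall_inP nKM).
have sub : (g @: <<M; z>>%AS <= <<M; z>>%AS)%VS.
  rewrite aimg_adjoin gM; apply/FadjoinP; split; first exact: subv_adjoin.
  by have [i ->] := AEnd_prim_root g pz; rewrite rpredX // memv_adjoin.
by rewrite -dimv_leqif_eq ?limg_dim_eq ?(eqP (AEnd_lker0 g)) ?capv0.
Qed.

End NormalFields.

Section Restriction.
Variables (L : splittingFieldType rat) (k K M E : {subfield L}).
Hypotheses (galE : galois k E) (sKE : (k <= K <= E)%VS) (sME : (k <= M <= E)%VS).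
Hypotheses (nK : normalField k K) (nM : normalField k M).

Lemma gal_restrict_mem (F : {subfield L}) :
  (k <= F <= E)%VS -> normalField k F ->
  forall g : gal_of E, g \in 'Gal(E / k)%g -> gal F g \in 'Gal(F / k)%g.
Proof.
move=> sFE nF g gE; rewrite -(normalField_img galE sFE nF).
exact: (mem_morphim (normalField_cast_morphism sFE nF) gE gE).
Qed.

Let restrK := normalField_cast_morphism sKE nK.

(* The fixed field of the image is inside K and fixed by Gal(E/M), i.e. inside
   K :&: M = k; the Galois correspondence in K then gives the inclusion. *)
Lemma gal_restrict_disjoint_onto :
  (K :&: M)%VS = k -> ('Gal(K / k) \subset restrK @* 'Gal(E / M))%g.
Proof.
move=> capKM.
have [[_ sKE'] [skM _]] := (andP sKE, andP sME).
suff /(galS K): (fixedField (restrK @* 'Gal(E / M))%G <= k)%VS.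
  by rewrite gal_fixedField.
apply/subvP => w /mem_fixedFieldP[wK fixw].
rewrite -capKM memv_cap wK -(galois_fixedField (galoisS sME galE)).
apply/fixedFieldP => [|h hEM]; first exact: (subvP sKE').
have hE : h \in 'Gal(E / k)%g by apply: (subsetP (galS E skM)).
rewrite -(normalField_cast_eq sKE nK hE wK); apply: fixw.
exact: mem_morphim.
Qed.

(* Extend g2 to some g' of Gal(E/k), then correct g' on K by an element of
   Gal(E/M), which does not disturb it on M. *)
Lemma gal_restrict_pair_onto (g1 : gal_of K) (g2 : gal_of M) :
    (K :&: M)%VS = k -> g1 \in 'Gal(K / k)%g -> g2 \in 'Gal(M / k)%g ->
  exists2 g, g \in 'Gal(E / k)%g & gal K g = g1 /\ gal M g = g2.
Proof.
move=> capKM g1G g2G; have [skM sME'] := andP sME.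
have nE : normalField k E by case/and3P: galE.
have [g' g'E Dg'] : {g' | g' \in 'Gal(E / k)%g & {in M, g2 =1 g'}}.
  by apply: kHom_to_gal => //; rewrite -gal_kHom.
have bG : ((gal K g')^-1 * g1)%g \in 'Gal(K / k)%g.
  by rewrite groupM ?groupV ?gal_restrict_mem.
have /morphimP[h hE hEM Dh] := subsetP (gal_restrict_disjoint_onto capKM) _ bG.
exists (g' * h)%g; first by rewrite groupM.
split.
  have := normalField_castM sKE nK g'E hE.
  by rewrite /normalField_cast => ->; rewrite -[gal K h]/(restrK h) -Dh mulKVg.
apply/eqP/gal_eqP => w wM.
rewrite (normalField_cast_eq sME nM (groupM g'E hE) wM) galM ?(subvP sME') //.
by rewrite -Dg' // (fixed_gal sME' hEM) // memv_gal.
Qed.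

End Restriction.

Section FixedFields.
Variables (L : splittingFieldType rat) (k k1 : {subfield L}) (hT : finGroupType).
Variables (mu : gal_of k1 -> {perm hT}) (tau : hT) (z : L).
Hypotheses (galk1 : galois k k1) (pz : (#[tau]%g).-primitive_root z).

Let E := <<k1; z>>%AS.
Let M := <<k; z>>%AS.

Let sk1 : (k <= k1)%VS. Proof. by case/and3P: galk1. Qed.
Let nk1 : normalField k k1. Proof. by case/and3P: galk1. Qed.
Let nM : normalField k M.
Proof. exact: normalField_adjoin_prim_root pz (normalField_refl k). Qed.
Let sk1E : (k <= k1 <= E)%VS. Proof. by rewrite sk1 subv_adjoin. Qed.
Let sME : (k <= M <= E)%VS. Proof. by rewrite subv_adjoin adjoinSl. Qed.

Let galE : galois k E.
Proof.
rewrite /galois char0_separable (normalField_adjoin_prim_root pz nk1) !andbT.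
exact: subv_trans sk1 (subv_adjoin k1 z).
Qed.

Lemma Gk1kmt_restrict g :
  g \in Gk1kmt k mu tau z -> gal M g \in Gkmt k mu tau z.
Proof.
rewrite !inE => /andP[gE cond].
rewrite (gal_restrict_mem galE sME nM gE) /=.
by apply/existsP; exists (gal k1 g); rewrite cond (gal_restrict_mem galE sk1E nk1).
Qed.

Lemma Ekmt_sub_Zk1kmt : (Ekmt k mu tau z <= Zk1kmt k mu tau z :&: M)%VS.
Proof.
have [_ sME'] := andP sME.
apply/subvP => x /mem_fixedFieldP[xM fixx]; rewrite memv_cap xM andbT.
apply/fixedFieldP => [|g gZ]; first exact: (subvP sME').
have gE : g \in 'Gal(E / k)%g by move: gZ; rewrite inE => /andP[].
by rewrite -(normalField_cast_eq sME nM gE xM) fixx ?Gk1kmt_restrict.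
Qed.

Lemma Zk1kmt_sub_Ekmt :
  (k1 :&: M)%VS = k -> (Zk1kmt k mu tau z :&: M <= Ekmt k mu tau z)%VS.
Proof.
move=> capk; apply/subvP => x /memv_capP[/mem_fixedFieldP[_ fixZ] xM].
apply/fixedFieldP => // g2; rewrite inE => /andP[g2G /exists_inP[g1 g1G cond]].
have [g gE [e1 e2]] := gal_restrict_pair_onto galE sk1E sME nk1 nM capk g1G g2G.
by rewrite -e2 (normalField_cast_eq sME nM gE xM) fixZ // inE gE /= e1 e2.
Qed.

End FixedFields.

Theorem mainTheorem14 (L : splittingFieldType rat) (k k1 : {subfield L})
  (hT : finGroupType) (H : {group hT})
  (mu : {morphism 'Gal(k1 / k)%g >-> {perm hT}}) (tau : hT) (z : L) :
  galois k k1 ->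
  abelian H ->
  (mu @* 'Gal(k1 / k) \subset Aut H)%g ->
  tau \in H ->
  (#[tau]%g).-primitive_root z ->
  (Ekmt k mu tau z <= Zk1kmt k mu tau z :&: <<k; z>>)%VS /\
  ((k1 :&: <<k; z>>)%VS = k ->
     Ekmt k mu tau z = (Zk1kmt k mu tau z :&: <<k; z>>)%VS).
Proof.
move=> galk1 _ _ _ pz; split; first exact: Ekmt_sub_Zk1kmt.
move=> capk; apply/eqP; rewrite eqEsubv.
by rewrite Ekmt_sub_Zk1kmt ?Zk1kmt_sub_Ekmt.
Qed.
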